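(* Let $K$ be a Cantor set with metric $d$. For every homeomorphism $T:K\to K$ and every $\varepsilon>0$ there exists a homeomorphism $\widetilde T:K\to K$ such that $D(T,\widetilde T)=\max_{x\in K} d(T(x),\widetilde T(x))<\varepsilon$ and, for every $x\in K$, the $\omega$-limit set of $x$ under $\widetilde T$ is a periodic orbit of $\widetilde T$.
   Context: A Cantor set is a nonempty totally disconnected, perfect, compact metric space. *)

From HB Require Import structures.
From mathcomp Require Import all_boot all_order all_algebra.
From mathcomp Require Import all_classical all_reals all_analysis.
Set Implicit Arguments. Unset Strict Implicit. Unset Printing Implicit Defensive.
Import Order.TTheory GRing.Theory Num.Theory.
Local Open Scope classical_set_scope.
Local Open Scope ring_scope.

Definition cantor_set (R : realType) (K : metricType R) : Prop :=
  [/\ [set: K] !=set0, totally_disconnected [set: K],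
      perfect_set [set: K] & compact [set: K]].

Definition homeomorphism (K : topologicalType) (f : K -> K) : Prop :=
  exists g : K -> K, [/\ cancel f g, cancel g f, continuous f & continuous g].

Definition omega_limit (K : topologicalType) (f : K -> K) (x : K) : set K :=
  [set y | forall U, nbhs y U -> forall N : nat,
           exists n : nat, (N <= n)%N /\ U (iter n f x)].

Definition periodic_orbit (K : Type) (f : K -> K) (O : set K) : Prop :=
  exists (p : K) (k : nat), [/\ (0 < k)%N, iter k f p = p &
                                O = range (fun n : nat => iter n f p)].

(* A Cantor set is homeomorphic to the Cantor space {0,1}^nat, so it is enough
   to approximate a homeomorphism T0 of the Cantor space on the first N bits.
   By uniform continuity the first N bits of T0 x depend only on the cell w of
   x, its first L bits, through a map f; let p w be the first N bits of w, and
   choose sections alpha of p and beta of f with disjoint images.  The map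
   sigma sends a cell w <> beta (f w) to alpha (f w) followed by the unary code
   of w in its fiber, while a cell beta u decodes such a code from the tail;
   the new cell always has p-value f w, so sigma is N-close to T0, and it is
   a homeomorphism.  An orbit that meets an alpha-cell stays among alpha-cells,
   driven by the eventually periodic map f \o alpha on {0,1}^N, and converges
   to a periodic orbit; an orbit that stays among beta-cells is periodic,
   since each of its steps is decoded from the next cell. *)

From HB Require Import structures.
From mathcomp Require Import all_boot all_order all_algebra.
From mathcomp Require Import all_classical all_reals all_analysis.
From mathcomp Require Import zify lra.
Set Implicit Arguments. Unset Strict Implicit. Unset Printing Implicit Defensive.
Import Order.TTheory GRing.Theory Num.Theory.
Import numFieldNormedType.Exports.
Local Open Scope classical_set_scope.

Definition eqprefix (n : nat) (x y : cantor_space) := forall i, (i < n)%N -> x i = y i.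

Lemma eqprefix_sym n x y : eqprefix n x y -> eqprefix n y x.
Proof. by move=> xy i lt_in; rewrite xy. Qed.

Lemma eqprefix_trans n x y z : eqprefix n x y -> eqprefix n y z -> eqprefix n x z.
Proof. by move=> xy yz i lt_in; rewrite xy // yz. Qed.

Lemma eqprefixW m n x y : (m <= n)%N -> eqprefix n x y -> eqprefix m x y.
Proof. by move=> le_mn xy i lt_im; apply: xy; exact: leq_trans lt_im le_mn. Qed.

Lemma cvg_cantor_coord (F : set_system cantor_space) (z : cantor_space) :
  Filter F -> (forall i, \forall y \near F, y i = z i) -> F --> z.
Proof.
move=> FF Fz; apply/cvg_sup => i U [V] [[W] oW <-] WzI WU.
apply: (filterS WU); rewrite nbhs_simpl; apply: filterS (Fz i) => y /= ->.
exact: WzI.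
Qed.

Lemma nbhs_coord (x : cantor_space) (i : nat) :
  nbhs x [set y : cantor_space | y i = x i].
Proof.
have /(_ [set x i]) xi_nbhs := @proj_continuous nat (fun _ => bool) i x.
by apply: xi_nbhs; exact: discrete_set1.
Qed.

Lemma nbhs_eqprefix (x : cantor_space) n : nbhs x [set y | eqprefix n x y].
Proof.
elim: n => [|n IHn]; first by apply: filterS filterT => y _ i.
apply: filterS (filterI IHn (nbhs_coord x n)) => y [xy yn] i.
by rewrite ltnS leq_eqVlt => /orP[/eqP -> //|/xy].
Qed.

Lemma open_eqprefix (x : cantor_space) n : open [set y | eqprefix n x y].
Proof.
rewrite openE => y xy; apply: filterS (nbhs_eqprefix y n) => z.
exact: eqprefix_trans.
Qed.

Lemma nbhs_eqprefixP (z : cantor_space) (A : set cantor_space) :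
  nbhs z A -> exists n, forall y, eqprefix n z y -> A y.
Proof.
move=> zA; apply: contrapT => /forallNP noprefix.
have witness n : exists y, eqprefix n z y /\ ~ A y.
  by have /existsNP [y /not_implyP] := noprefix n; exists y.
have [y yP] := choice witness.
have : y @ \oo --> z.
  apply: cvg_cantor_coord => i; exists i.+1 => // n /= lt_in.
  by case: (yP n) => /(_ i lt_in) ->.
move=> /(_ A zA) [N _ AyN].
by have [_ /(_ (AyN N (leqnn N)))] := yP N.
Qed.

Lemma continuous_cantor_prefix (f : cantor_space -> cantor_space) :
  (forall x i, exists n, forall y, eqprefix n x y -> f y i = f x i) -> continuous f.
Proof.
move=> flocal x; apply: cvg_cantor_coord => i.
have [n fn] := flocal x i.
by apply: filterS (nbhs_eqprefix x n) => y /fn.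
Qed.

Lemma cantor_uniform_prefix (Q : cantor_space -> cantor_space -> Prop) :
  (forall x, exists n, forall y z, eqprefix n x y -> eqprefix n x z -> Q y z) ->
  exists L, forall y z, eqprefix L y z -> Q y z.
Proof.
move=> /choice [n nP].
have := cantor_space_compact; rewrite compact_cover => /(_ cantor_space setT
  (fun x => [set y | eqprefix (n x) x y])).
case=> [x _|y _|D _ cover]; first exact: open_eqprefix.
  by exists y.
exists (\max_(x <- finmap.enum_fset D) n x) => y z yz.
have [x xD /= xy] := cover y I.
apply: (nP x) => //; apply: eqprefix_trans xy _.
by apply: eqprefixW yz; exact: leq_bigmax_seq.
Qed.

Lemma continuous_eqprefix (F : cantor_space -> cantor_space) N : continuous F ->
  exists L, forall y z, eqprefix L y z -> eqprefix N (F y) (F z).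
Proof.
move=> Fc; apply: cantor_uniform_prefix => x.
have /nbhs_eqprefixP [n Fn] := Fc x _ (nbhs_eqprefix (F x) N).
exists n => y z xy xz; apply: eqprefix_trans (Fn z xz).
exact: eqprefix_sym (Fn y xy).
Qed.

Definition prepend (w : seq bool) (s : cantor_space) : cantor_space :=
  fun i => if (i < size w)%N then nth false w i else s (i - size w)%N.

Definition skip (k : nat) (s : cantor_space) : cantor_space := fun i => s (i + k)%N.

Definition first_false (n : nat) (s : cantor_space) : nat :=
  find (fun i => ~~ s i) (iota 0 n).

Definition unary (j : nat) : seq bool := nseq j true ++ [:: false].

Lemma prepend_nil s : prepend [::] s = s.
Proof. by apply: funext => i; rewrite /prepend /= subn0. Qed.

Lemma prepend_cat w1 w2 s : prepend (w1 ++ w2) s = prepend w1 (prepend w2 s).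
Proof.
apply: funext => i; rewrite /prepend size_cat nth_cat.
case: (ltnP i (size w1)) => [lt_iw1|le_w1i]; first by rewrite ltn_addr.
by rewrite ltn_subLR // -subnDA.
Qed.

Lemma prepend_nth w s i : (i < size w)%N -> prepend w s i = nth false w i.
Proof. by rewrite /prepend => ->. Qed.

Lemma skip_prepend w s : skip (size w) (prepend w s) = s.
Proof. by apply: funext => i; rewrite /skip /prepend ltnNge leq_addl /= addnK. Qed.

Lemma skipD a b s : skip a (skip b s) = skip (a + b) s.
Proof. by apply: funext => i; rewrite /skip addnA. Qed.

Lemma prepend_skip w x : (forall i, (i < size w)%N -> x i = nth false w i) ->
  prepend w (skip (size w) x) = x.
Proof.
move=> xw; apply: funext => i; rewrite /prepend /skip.
by case: ltnP => [lt_iw|le_wi]; [rewrite xw | rewrite subnK].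
Qed.

Lemma continuous_prepend w : continuous (prepend w).
Proof.
apply: continuous_cantor_prefix => x i; exists (i - size w).+1 => y xy.
by rewrite /prepend; case: ifP => // _; rewrite xy.
Qed.

Lemma eqprefix_skip k n x y :
  eqprefix (k + n) x y -> eqprefix n (skip k x) (skip k y).
Proof. by move=> xy i lt_in; rewrite /skip xy // addnC ltn_add2l. Qed.

Lemma size_unary j : size (unary j) = j.+1.
Proof. by rewrite size_cat size_nseq addn1. Qed.

Lemma prepend_unary j s : prepend (unary j) s =
  fun i => if (i < j)%N then true else if i == j then false else s (i - j.+1)%N.
Proof.
apply: funext => i; rewrite /prepend size_unary nth_cat size_nseq nth_nseq.
case: (ltngtP i j) => [lt_ij|lt_ji|ij]; first by rewrite ltnS ltnW.
  by rewrite ltnNge lt_ji.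
by rewrite ij ltnSn subnn.
Qed.

Lemma first_false_le n s : (first_false n s <= n)%N.
Proof. by have := find_size (fun i => ~~ s i) (iota 0 n); rewrite size_iota. Qed.

Lemma first_false_lt n s : (first_false n s < n)%N -> s (first_false n s) = false.
Proof.
move=> lt_jn; have := lt_jn; rewrite -[X in (_ < X)%N](size_iota 0 n) -has_find.
by move=> /(nth_find 0); rewrite nth_iota // add0n; case: (s _).
Qed.

Lemma before_first_false n s i : (i < first_false n s)%N -> s i = true.
Proof.
move=> lt_ij; have lt_in : (i < n)%N := leq_trans lt_ij (first_false_le _ _).
by have := before_find 0 lt_ij; rewrite nth_iota // add0n; case: (s i).
Qed.

Lemma first_false_eq n s j : (j <= n)%N -> (forall i, (i < j)%N -> s i = true) ->
  ((j < n)%N -> s j = false) -> first_false n s = j.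
Proof.
move=> le_jn ones_j sj; apply/eqP; rewrite eqn_leq; apply/andP; split.
  case: ltngtP le_jn => // [lt_jn _|-> _]; last exact: first_false_le.
  by rewrite leqNgt; apply/negP => /before_first_false; rewrite sj.
rewrite leqNgt; apply/negP => lt_fj.
by have := first_false_lt (leq_trans lt_fj le_jn); rewrite ones_j.
Qed.

Lemma first_false_unary n j s : (j < n)%N -> first_false n (prepend (unary j) s) = j.
Proof.
move=> lt_jn; apply: first_false_eq => [|i lt_ij|_]; first exact: ltnW.
  by rewrite prepend_unary lt_ij.
by rewrite prepend_unary ltnn eqxx.
Qed.

Lemma first_false_ones m s : first_false m (prepend (nseq m true) s) = m.
Proof.
apply: first_false_eq => // [i lt_im|]; last by rewrite ltnn.
by rewrite prepend_nth ?size_nseq // nth_nseq lt_im.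
Qed.

Lemma prepend_unary_first_false n s : let j := first_false n s in
  (j < n)%N -> prepend (unary j) (skip j.+1 s) = s.
Proof.
move=> j lt_jn; rewrite prepend_unary; apply: funext => i; rewrite /skip.
case: ltngtP => [lt_ij|lt_ji|->]; first by rewrite (before_first_false lt_ij).
  by rewrite subnK.
by rewrite first_false_lt.
Qed.

Lemma prepend_ones_first_false n s : first_false n s = n ->
  prepend (nseq n true) (skip n s) = s.
Proof.
move=> jn; have := @prepend_skip (nseq n true) s; rewrite size_nseq; apply=> i lt_in.
by rewrite nth_nseq lt_in (@before_first_false n s i) // jn.
Qed.

Lemma eqprefix_first_false n s s' : eqprefix n s s' -> first_false n s = first_false n s'.
Proof.
move=> ss'; apply: eq_in_find => i; rewrite mem_iota add0n => /andP[_ lt_in].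
by rewrite ss'.
Qed.

Section Cells.
Variable L : nat.
Local Notation Cell := (L.-tuple bool).

Definition cell (x : cantor_space) : Cell := [tuple x i | i < L].

Lemma nth_cell x i : (i < L)%N -> nth false (cell x) i = x i.
Proof. by move=> lt_iL; rewrite -(tnth_nth false _ (Ordinal lt_iL)) tnth_mktuple. Qed.

Lemma prepend_cell x : prepend (cell x) (skip L x) = x.
Proof.
rewrite -{2}(size_tuple (cell x)); apply: prepend_skip => i.
by rewrite size_tuple => lt_iL; rewrite nth_cell.
Qed.

Lemma cell_prepend (w : Cell) s : cell (prepend w s) = w.
Proof.
apply: eq_from_tnth => i; rewrite tnth_mktuple prepend_nth ?size_tuple //.
by rewrite (tnth_nth false).
Qed.

Lemma skip_prepend_cell (w : Cell) s : skip L (prepend w s) = s.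
Proof. by rewrite -{1}(size_tuple w) skip_prepend. Qed.

Lemma eqprefix_cell x y : eqprefix L x y -> cell x = cell y.
Proof. by move=> xy; apply: eq_from_tnth => i; rewrite !tnth_mktuple xy. Qed.

End Cells.

(* An unmarked cell is replaced by the marked cell [c u] of its key followed
   by the unary code of its position in [P u]; a marked cell reads such a code
   back.  Hence the same recipe with [P] and [Q] exchanged inverts [recode]. *)
Section Recode.
Variables (L : nat) (G : finType).
Local Notation Cell := (L.-tuple bool).
Variables (marked : Cell -> bool) (key : Cell -> G) (P Q : G -> seq Cell)
  (c : G -> Cell).

Definition recode_on (w : Cell) (s : cantor_space) : cantor_space :=
  if ~~ marked w then prepend (c (key w) ++ unary (index w (P (key w)))) s
  else let u := key w in let n := size (Q u) in let j := first_false n s in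
   if (j < n)%N then prepend (nth w (Q u) j) (skip j.+1 s)
   else prepend (c u ++ nseq (size (P u)) true) (skip n s).

Definition recode (x : cantor_space) : cantor_space := recode_on (cell L x) (skip L x).

Lemma recode_prepend (w : Cell) s : recode (prepend w s) = recode_on w s.
Proof. by rewrite /recode cell_prepend skip_prepend_cell. Qed.

Lemma recode_local x : exists W k m, forall y, eqprefix m x y ->
  recode y = prepend W (skip k y).
Proof.
rewrite /recode /recode_on; set w := cell L x.
case mw: (marked w) => /=; last first.
  exists (c (key w) ++ unary (index w (P (key w)))), L, L => y xy.
  by rewrite -(eqprefix_cell xy) -/w mw.
set u := key w; set n := size (Q u); set j := first_false n (skip L x).
exists (if (j < n)%N then val (nth w (Q u) j) else c u ++ nseq (size (P u)) true).
exists (if (j < n)%N then j.+1 + L else n + L).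
exists (L + n) => y xy.
have wy : cell L y = w by rewrite /w (eqprefix_cell (eqprefixW (leq_addr _ _) xy)).
have jy : first_false n (skip L y) = j by apply/esym/eqprefix_first_false/eqprefix_skip.
by rewrite wy mw /= -/u -/n jy; case: ifP; rewrite skipD.
Qed.

Lemma continuous_recode : continuous recode.
Proof.
apply: continuous_cantor_prefix => x i.
have [W [k [m recodeE]]] := recode_local x.
exists (m + (k + i).+1) => y xy.
rewrite (recodeE y (eqprefixW (leq_addr _ _) xy)) (recodeE x (fun _ _ => erefl)).
by rewrite /prepend /skip; case: ifP => // _; rewrite xy //; lia.
Qed.

End Recode.

Section RecodeInverse.
Variables (L : nat) (G : finType).
Local Notation Cell := (L.-tuple bool).
Variables (marked1 marked2 : Cell -> bool) (key1 key2 : Cell -> G)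
  (P Q : G -> seq Cell) (c d : G -> Cell).
Hypotheses (memP : forall u w, (w \in P u) = ~~ marked1 w && (key1 w == u))
  (memQ : forall u v, (v \in Q u) = ~~ marked2 v && (key2 v == u))
  (uniqQ : forall u, uniq (Q u))
  (c_marked : forall u, marked2 (c u) /\ key2 (c u) = u)
  (marked_d : forall w, marked1 w -> w = d (key1 w)).

Lemma recodeK : cancel (recode marked1 key1 P Q c) (recode marked2 key2 Q P d).
Proof.
move=> x; rewrite -(prepend_cell L x) recode_prepend /recode_on.
set w := cell L x; set s := skip L x; set u := key1 w.
have [c2 kc] := c_marked u.
case: ifPn => [umw|/negPn mw].
  have wP : w \in P u by rewrite memP umw eqxx.
  have lt_jP : (index w (P u) < size (P u))%N by rewrite index_mem.
  rewrite prepend_cat recode_prepend /recode_on c2 /= kc first_false_unary //.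
  by rewrite lt_jP nth_index // -(size_unary (index _ _)) skip_prepend.
have wd : w = d u by exact: marked_d.
rewrite [in RHS]wd.
set n := size (Q u); set j := first_false n s.
case: ltnP => [lt_jn|le_nj].
  set v := nth w (Q u) j; have : v \in Q u by exact: mem_nth.
  rewrite memQ => /andP [mv /eqP kv].
  rewrite recode_prepend /recode_on mv /= kv index_uniq // prepend_cat.
  by rewrite prepend_unary_first_false.
have jn : j = n by apply/eqP; rewrite eqn_leq first_false_le.
rewrite prepend_cat recode_prepend /recode_on c2 /= kc first_false_ones ltnn.
by rewrite -{1}(size_nseq (size (P u)) true) skip_prepend prepend_cat
  prepend_ones_first_false.
Qed.

End RecodeInverse.

Lemma iter_mul_fixed (T : Type) (g : T -> T) d b : iter d g b = b ->
  forall m, iter (m * d) g b = b.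
Proof. by move=> gb; elim=> [//|m IHm]; rewrite mulSn iterD IHm gb. Qed.

Lemma iter_card_fixed (G : finType) (g : G -> G) a :
  iter (#|G|)`! g (iter #|G| g a) = iter #|G| g a.
Proof.
pose F (i : 'I_#|G|.+1) := iter i g a.
have [i [j [Fij lt_ij]]] : exists i j, F i = F j /\ (i < j)%N.
  have /existsNP [i /existsNP [j /not_implyP [Fij nij]]] : ~ injective F.
    by move=> /leq_card; rewrite card_ord ltnn.
  have : val i != val j by apply/eqP => /val_inj.
  by rewrite neq_ltn => /orP [lt_ij|lt_ji]; [exists i, j | exists j, i].
have le_iG : (i <= #|G|)%N by rewrite -ltnS.
have le_jG : (j <= #|G|)%N by rewrite -ltnS.
have period : iter (j - i) g (iter #|G| g a) = iter #|G| g a.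
  rewrite -iterD; have -> : (j - i + #|G| = (#|G| - i) + j)%N by lia.
  by rewrite iterD -/(F j) -Fij -iterD subnK.
have /dvdnP [m ->] : (j - i %| (#|G|)`!)%N.
  by apply: dvdn_fact; rewrite subn_gt0 lt_ij (leq_trans (leq_subr _ _) le_jG).
exact: iter_mul_fixed.
Qed.

Lemma backward_orbit_periodic (G : finType) (h : G -> G) (u : nat -> G) :
  (forall n, h (u n.+1) = u n) -> forall n, u (n + (#|G|)`!)%N = u n.
Proof.
move=> hu; have iter_back k n : iter k h (u (n + k)%N) = u n.
  by elim: k n => [n|k IHk n]; rewrite ?addn0 // iterSr addnS hu IHk.
move=> n; rewrite -(iter_back (#|G|)`! n) -(iter_back #|G| (n + (#|G|)`!)%N).
by rewrite iter_card_fixed iter_back.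
Qed.

Lemma continuous_iter (X : topologicalType) (F : X -> X) : continuous F ->
  forall j, continuous (iter j F).
Proof.
move=> Fc; elim=> [|j IHj] x /=; first exact: cvg_id.
exact: continuous_comp (IHj x) (Fc _).
Qed.

Definition asymptotically_periodic (X : topologicalType) (F : X -> X) (x : X) :=
  exists z q n0, [/\ (0 < q)%N, iter q F z = z &
    forall j, (fun k => iter (n0 + k * q + j)%N F x) @ \oo --> iter j F z].

Lemma periodic_asymptotically_periodic (X : topologicalType) (F : X -> X) x q :
  (0 < q)%N -> iter q F x = x -> asymptotically_periodic F x.
Proof.
move=> q_gt0 Fx; exists x, q, 0%N; split => // j.
under eq_fun do rewrite add0n addnC iterD (iter_mul_fixed Fx).
exact: cvg_cst.
Qed.

Definition cycle_stream (w : seq bool) : cantor_space :=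
  fun i => nth false w (i %% size w).

Lemma prepend_cycle_stream w : (0 < size w)%N -> prepend w (cycle_stream w) = cycle_stream w.
Proof.
move=> w_gt0; apply: funext => i; rewrite /prepend /cycle_stream.
by case: ltnP => [/modn_small -> //|le_wi]; rewrite -{2}(subnK le_wi) modnDr.
Qed.

Lemma cvg_prepend_fixed (W : nat -> seq bool) (z s : cantor_space) :
  (forall m, prepend (W m) z = z) ->
  (forall i, \forall m \near \oo, (i < size (W m))%N) ->
  (fun m => prepend (W m) s) @ \oo --> z.
Proof.
move=> Wz Wlong; apply: cvg_cantor_coord => i.
by apply: filterS (Wlong i) => m lt_iW /=; rewrite -(Wz m) !prepend_nth.
Qed.

Lemma unfold_periodic (W : nat -> seq bool) (t : nat -> cantor_space) q :
  (forall n, 0 < size (W n))%N -> (forall n, t n = prepend (W n) (t n.+1)) ->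
  (forall n, W (n + q)%N = W n) -> forall n, t (n + q)%N = t n.
Proof.
move=> W_gt0 tW Wq n; apply: funext => i; elim/ltn_ind: i n => i IHi n.
rewrite (tW (n + q)%N) (tW n) Wq -addSn /prepend; case: ltnP => // le_Wi.
by apply: IHi; rewrite ltn_subrL W_gt0 (leq_trans (W_gt0 _) le_Wi).
Qed.

Section Construction.
Variables (N L : nat).
Local Notation G := (N.-tuple bool).
Local Notation Cell := (L.-tuple bool).
Variables (f p : Cell -> G) (alpha beta : G -> Cell).
Hypotheses (p_alpha : forall u, p (alpha u) = u) (f_beta : forall u, f (beta u) = u)
  (alpha_neq_beta : forall u v, alpha u != beta v).

Definition isA (w : Cell) := w == alpha (p w).
Definition isB (w : Cell) := w == beta (f w).
Definition nonB_fiber u := [seq w <- enum {: Cell} | ~~ isB w && (f w == u)].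
Definition nonA_fiber u := [seq w <- enum {: Cell} | ~~ isA w && (p w == u)].
Definition sigma := recode isB f nonB_fiber nonA_fiber alpha.
Definition tau := recode isA p nonA_fiber nonB_fiber beta.

Lemma mem_nonB_fiber u w : (w \in nonB_fiber u) = ~~ isB w && (f w == u).
Proof. by rewrite mem_filter mem_enum andbT. Qed.

Lemma mem_nonA_fiber u w : (w \in nonA_fiber u) = ~~ isA w && (p w == u).
Proof. by rewrite mem_filter mem_enum andbT. Qed.

Lemma uniq_nonB_fiber u : uniq (nonB_fiber u).
Proof. by rewrite filter_uniq // enum_uniq. Qed.

Lemma uniq_nonA_fiber u : uniq (nonA_fiber u).
Proof. by rewrite filter_uniq // enum_uniq. Qed.

Lemma isA_alpha u : isA (alpha u). Proof. by rewrite /isA p_alpha. Qed.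
Lemma isB_beta u : isB (beta u). Proof. by rewrite /isB f_beta. Qed.
Lemma isB_alpha u : ~~ isB (alpha u). Proof. by rewrite /isB alpha_neq_beta. Qed.

Lemma sigmaK : cancel sigma tau.
Proof.
apply: (recodeK (@mem_nonB_fiber) (@mem_nonA_fiber) uniq_nonA_fiber
  (fun u => conj (isA_alpha u) (p_alpha u))).
by move=> w /eqP.
Qed.

Lemma tauK : cancel tau sigma.
Proof.
apply: (recodeK (@mem_nonA_fiber) (@mem_nonB_fiber) uniq_nonB_fiber
  (fun u => conj (isB_beta u) (f_beta u))).
by move=> w /eqP.
Qed.

Lemma continuous_sigma : continuous sigma. Proof. exact: continuous_recode. Qed.
Lemma continuous_tau : continuous tau. Proof. exact: continuous_recode. Qed.

Definition nonB_code (w : Cell) := unary (index w (nonB_fiber (f w))).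

Lemma sigma_nonB (w : Cell) s : ~~ isB w ->
  sigma (prepend w s) = prepend (alpha (f w)) (prepend (nonB_code w) s).
Proof. by move=> Bw; rewrite /sigma recode_prepend /recode_on Bw prepend_cat. Qed.

Lemma sigma_beta u s : sigma (prepend (beta u) s) =
  let n := size (nonA_fiber u) in let j := first_false n s in
  if (j < n)%N then prepend (nth (beta u) (nonA_fiber u) j) (skip j.+1 s)
  else prepend (alpha u ++ nseq (size (nonB_fiber u)) true) (skip n s).
Proof. by rewrite /sigma recode_prepend /recode_on isB_beta f_beta. Qed.

Lemma p_cell_sigma x : p (cell L (sigma x)) = f (cell L x).
Proof.
rewrite -(prepend_cell L x); set w := cell L x; set s := skip L x.
rewrite cell_prepend; have [Bw|Bw] := boolP (isB w); last first.
  by rewrite sigma_nonB // cell_prepend p_alpha.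
rewrite (eqP Bw) sigma_beta f_beta /=; case: ifP => [lt_jn|_].
  have /[!mem_nonA_fiber] /andP[_ /eqP] := mem_nth (beta (f w)) lt_jn.
  by rewrite cell_prepend.
by rewrite prepend_cat cell_prepend p_alpha.
Qed.

Definition fA u := f (alpha u).

Fixpoint alpha_trail u k :=
  if k is k'.+1 then nonB_code (alpha (iter k' fA u)) ++ alpha_trail u k' else [::].

Lemma iter_sigma_alpha k u s : iter k sigma (prepend (alpha u) s) =
  prepend (alpha (iter k fA u)) (prepend (alpha_trail u k) s).
Proof.
elim: k => [|k IHk] /=; first by rewrite prepend_nil.
by rewrite IHk sigma_nonB ?isB_alpha // prepend_cat.
Qed.

Lemma alpha_trailD u a b :
  alpha_trail u (b + a) = alpha_trail (iter a fA u) b ++ alpha_trail u a.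
Proof. by elim: b => [//|b IHb]; rewrite addSn /= IHb catA -iterD. Qed.

Lemma size_alpha_trail u k : (k <= size (alpha_trail u k))%N.
Proof.
elim: k => [//|k IHk] /=; rewrite size_cat /nonB_code size_unary addSn ltnS.
exact: leq_trans IHk (leq_addl _ _).
Qed.

(* After [K] steps the label [v] of the alpha-cell lies on a cycle of [fA],
   whose length divides [q]; the stream then converges to [alpha v] followed by
   the periodic repetition of the codes written during one period. *)
Lemma asymptotically_periodic_alpha x n0 u s : iter n0 sigma x = prepend (alpha u) s ->
  asymptotically_periodic sigma x.
Proof.
move=> xn0; set K := #|{: G}|; set q := K`!; set v := iter K fA u.
have vq : iter q fA v = v by exact: iter_card_fixed.
have q_gt0 : (0 < q)%N by exact: fact_gt0.
set C := cycle_stream (alpha_trail v q).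
have C_fixed m : prepend (alpha_trail v (m * q)) C = C.
  elim: m => [|m IHm]; first by rewrite prepend_nil.
  rewrite mulSn alpha_trailD (iter_mul_fixed vq) prepend_cat IHm prepend_cycle_stream //.
  exact: leq_trans q_gt0 (size_alpha_trail _ _).
set z := prepend (alpha v) C.
exists z, q, (K + n0)%N; split.
- exact: q_gt0.
- by rewrite iter_sigma_alpha vq prepend_cycle_stream // (leq_trans q_gt0) ?size_alpha_trail.
move=> j; set s' := prepend (alpha_trail u K) s.
have -> : (fun k => iter (K + n0 + k * q + j) sigma x) =
    (iter j sigma \o prepend (alpha v)) \o (fun k => prepend (alpha_trail v (k * q)) s').
  apply: funext => k /=; have -> : (K + n0 + k * q + j = j + (k * q + (K + n0)))%N by lia.
  by rewrite !iterD xn0 2!iter_sigma_alpha (iter_mul_fixed vq).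
apply: continuous_cvg.
  have iter_cont := @continuous_iter _ sigma continuous_sigma j.
  by apply: continuous_comp; [exact: continuous_prepend | exact: iter_cont].
apply: cvg_prepend_fixed => [//|i]; exists i.+1 => // m /= lt_im.
exact: leq_trans lt_im (leq_trans (leq_pmulr _ q_gt0) (size_alpha_trail _ _)).
Qed.

Lemma sigma_beta_beta u v t t' : sigma (prepend (beta u) t) = prepend (beta v) t' ->
  p (beta v) = u /\ t = prepend (unary (index (beta v) (nonA_fiber u))) t'.
Proof.
rewrite sigma_beta /=; set n := size (nonA_fiber u); set j := first_false n t.
case: ltnP => [lt_jn|_] e; last first.
  have := congr1 (cell L) e; rewrite prepend_cat !cell_prepend => /eqP.
  by rewrite (negbTE (alpha_neq_beta _ _)).
have beta_v := congr1 (cell L) e; rewrite !cell_prepend in beta_v.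
have := congr1 (skip L) e; rewrite !skip_prepend_cell => tt'.
have /[!mem_nonA_fiber] /andP[_ /eqP pw] := mem_nth (beta u) lt_jn.
by rewrite -beta_v pw index_uniq ?uniq_nonA_fiber // -tt' prepend_unary_first_false.
Qed.

Lemma sigma_always_B_periodic x : (forall n, isB (cell L (iter n sigma x))) ->
  iter (#|{: G}|)`! sigma x = x.
Proof.
move=> allB; pose u n := f (cell L (iter n sigma x)); pose t n := skip L (iter n sigma x).
have xn n : iter n sigma x = prepend (beta (u n)) (t n).
  by rewrite /u /t -(eqP (allB n)) prepend_cell.
have step n : p (beta (u n.+1)) = u n /\
    t n = prepend (unary (index (beta (u n.+1)) (nonA_fiber (u n)))) (t n.+1).
  by apply: sigma_beta_beta; rewrite -xn -iterS xn.
have uq := @backward_orbit_periodic _ (p \o beta) u (fun n => (step n).1).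
have tq : forall n, t (n + (#|{: G}|)`!)%N = t n.
  apply: (unfold_periodic (W := fun n => unary (index (beta (u n.+1)) (nonA_fiber (u n)))))
    => [n|n|n]; [by rewrite size_unary | exact: (step n).2 | by rewrite uq -addSn uq].
by rewrite xn -(add0n (#|{: G}|)`!) uq tq -xn.
Qed.

Lemma asymptotically_periodic_sigma x : asymptotically_periodic sigma x.
Proof.
have [[n Bn]|] := pselect (exists n, ~~ isB (cell L (iter n sigma x))).
  apply: (@asymptotically_periodic_alpha x n.+1 (f (cell L (iter n sigma x)))
    (prepend (nonB_code (cell L (iter n sigma x))) (skip L (iter n sigma x)))).
  by rewrite iterS -{1}(prepend_cell L (iter n sigma x)) sigma_nonB.
move=> /forallNP allB; apply: (periodic_asymptotically_periodic (fact_gt0 _)).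
by apply: sigma_always_B_periodic => n; apply/negPn/negP/allB.
Qed.

End Construction.

Lemma eqprefix_prepend_cell L x s : eqprefix L (prepend (cell L x) s) x.
Proof. by move=> i lt_iL; rewrite prepend_nth ?size_tuple ?nth_cell. Qed.

Lemma cell_eqprefix n x (w : n.-tuple bool) s : eqprefix n x (prepend w s) -> cell n x = w.
Proof. by move=> /eqprefix_cell ->; rewrite cell_prepend. Qed.

(* The last bit of a cell lies beyond both [L0] and [N]: it is [false] in
   [pad u] and [true] in [pull v]. *)
Section Approximation.
Variables (T0 T0i : cantor_space -> cantor_space) (L0 N : nat).
Hypotheses (T0iK : cancel T0i T0)
  (T0_prefix : forall y z, eqprefix L0 y z -> eqprefix N (T0 y) (T0 z)).

Let L := (maxn L0 N).+1.
Let zeros : cantor_space := fun=> false.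
Let ones : cantor_space := fun=> true.

Definition chop_T0 (w : L.-tuple bool) : N.-tuple bool := cell N (T0 (prepend w zeros)).
Definition chop (w : L.-tuple bool) : N.-tuple bool := cell N (prepend w zeros).
Definition pad (u : N.-tuple bool) : L.-tuple bool := cell L (prepend u zeros).
Definition pull (u : N.-tuple bool) : L.-tuple bool :=
  cell L (prepend (cell L.-1 (T0i (prepend u zeros))) ones).

Definition cantor_approx := sigma chop_T0 chop pad pull.
Definition cantor_approx_inv := tau chop_T0 chop pad pull.

Let le_NL : (N <= L)%N. Proof. by rewrite leqW ?leq_maxr. Qed.
Let le_L0L : (L0 <= L.-1)%N. Proof. exact: leq_maxl. Qed.

Lemma chop_pad u : chop (pad u) = u.
Proof.
apply: (@cell_eqprefix _ _ _ zeros); apply: eqprefixW le_NL _.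
exact: eqprefix_prepend_cell.
Qed.

Lemma chop_T0_pull u : chop_T0 (pull u) = u.
Proof.
apply: (@cell_eqprefix _ _ _ zeros); rewrite -[X in eqprefix _ _ X]T0iK.
apply: T0_prefix; apply: eqprefixW le_L0L _.
apply: (eqprefix_trans (y := prepend (cell L.-1 (T0i (prepend u zeros))) ones)).
  by apply: eqprefixW (leq_pred _) _; exact: eqprefix_prepend_cell.
exact: eqprefix_prepend_cell.
Qed.

Lemma pad_neq_pull u v : pad u != pull v.
Proof.
apply/eqP => /(congr1 (fun w : L.-tuple bool => nth false w L.-1)).
by rewrite !nth_cell // /prepend !size_tuple ltnn ltnNge /= leq_maxr.
Qed.

Lemma cantor_approxK : cancel cantor_approx cantor_approx_inv.
Proof. apply: sigmaK; exact: chop_pad. Qed.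

Lemma cantor_approx_invK : cancel cantor_approx_inv cantor_approx.
Proof. apply: tauK; exact: chop_T0_pull. Qed.

Lemma eqprefix_cantor_approx x : eqprefix N (cantor_approx x) (T0 x).
Proof.
move=> i lt_iN; have := p_cell_sigma chop_pad chop_T0_pull x.
move=> /(congr1 (fun w : N.-tuple bool => nth false w i)).
rewrite !nth_cell // prepend_nth ?size_tuple ?nth_cell ?(leq_trans lt_iN) //.
rewrite /cantor_approx => ->.
apply: T0_prefix => //; apply: eqprefixW (leq_trans le_L0L (leq_pred _)) _.
exact: eqprefix_prepend_cell.
Qed.

Lemma asymptotically_periodic_cantor_approx x : asymptotically_periodic cantor_approx x.
Proof. exact: asymptotically_periodic_sigma chop_T0_pull pad_neq_pull x. Qed.

End Approximation.

Lemma cantor_space_approx (T0 : cantor_space -> cantor_space) (N : nat) :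
  homeomorphism T0 -> exists s : cantor_space -> cantor_space,
  [/\ homeomorphism s, forall x, eqprefix N (s x) (T0 x) &
      forall x, asymptotically_periodic s x].
Proof.
move=> [T0i [_ T0iK T0c _]]; have [L0 T0_prefix] := continuous_eqprefix N T0c.
exists (cantor_approx T0 T0i L0 N); split.
- exists (cantor_approx_inv T0 T0i L0 N); split.
  + exact: cantor_approxK.
  + exact: cantor_approx_invK.
  + exact: continuous_sigma.
  + exact: continuous_tau.
- exact: eqprefix_cantor_approx.
- exact: asymptotically_periodic_cantor_approx.
Qed.

Section QuasiComponent.
Variable T : ptopologicalType.
Hypotheses (hausT : hausdorff_space T) (cptT : compact [set: T]).

Definition quasi_component (x : T) := [set z | forall C, clopen C -> C x -> C z].

Lemma closed_quasi_component x : closed (quasi_component x).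
Proof.
have -> : quasi_component x = \bigcap_(C in [set C | clopen C /\ C x]) C.
  by apply/seteqP; split => [z xz C [] | z xz C clC Cx]; [exact: xz | exact: xz].
by apply: closed_bigI => C [[]].
Qed.

Lemma separate_closed (E1 E2 : set T) : closed E1 -> closed E2 -> E1 `&` E2 = set0 ->
  exists U1 U2, [/\ open U1, open U2, E1 `<=` U1, E2 `<=` U2 & U1 `&` U2 = set0].
Proof.
move=> clE1 clE2 E12.
have : set_nbhs E1 (~` E2).
  move=> x E1x; apply: open_nbhs_nbhs; split; first exact: closed_openC.
  by move=> E2x; have : (E1 `&` E2) x by []; rewrite E12.
move=> /(compact_normal hausT cptT clE1) [V V1 clV].
exists (interior V), (~` closure V); split.
- exact: open_interior.
- by apply: closed_openC; exact: closed_closure.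
- by move=> x /V1.
- by move=> x E2x clx; have := clV x clx.
- apply/seteqP; split => [x [iV nclV]|//]; apply: nclV.
  by apply: subset_closure; exact: interior_subset.
Qed.

Lemma clopen_between_quasi_component x (U : set T) : open U ->
  quasi_component x `<=` U -> exists C, [/\ clopen C, C x & C `<=` U].
Proof.
move=> oU xU.
have sep z : exists C : set T, [/\ clopen C, C x & ~ U z -> ~ C z].
  have [Uz|Uz] := pselect (U z); first by exists setT; split => //; exact: clopenT.
  have /existsNP [C /not_implyP [clC /not_implyP [Cx nCz]]] : ~ quasi_component x z.
    exact: contra_not (xU z) Uz.
  by exists C.
have [Cf CfP] := choice sep.
have := cptT; rewrite compact_cover => /(_ T setT (fun z => ~` Cf z `|` U)).
case=> [z _|z _|D _ cover].
- by apply: openU => //; have [[_ ?] _ _] := CfP z; exact: closed_openC.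
- exists z => //; have [Uz|Uz] := pselect (U z); first by right.
  by left; have [_ _ /(_ Uz)] := CfP z.
exists (\bigcap_(z in [set` finmap.enum_fset D]) Cf z); split.
- rewrite bigcap_seq.
  apply: big_ind => [|A B|z _]; [exact: clopenT | exact: clopenI |].
  by have [] := CfP z.
- by move=> z _; have [] := CfP z.
- by move=> w Cw; have [z Dz [nCw|//]] := cover w I; exfalso; exact/nCw/Cw.
Qed.

Lemma quasi_component_sub_closed x (E1 E2 : set T) :
  closed E1 -> closed E2 -> E1 `&` E2 = set0 ->
  quasi_component x `<=` E1 `|` E2 -> E1 x -> quasi_component x `<=` E1.
Proof.
move=> clE1 clE2 E12 xE E1x.
have [U1 [U2 [oU1 oU2 EU1 EU2 U12]]] := separate_closed clE1 clE2 E12.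
have [C [clC Cx CU]] := clopen_between_quasi_component (openU oU1 oU2)
  (subset_trans xE (setUSS EU1 EU2)).
have CU1E : C `&` U1 = C `&` ~` U2.
  apply/seteqP; split => w [Cw Uw]; split => //.
    by move=> U2w; have : (U1 `&` U2) w by []; rewrite U12.
  by have [] := CU w Cw.
have clCU1 : clopen (C `&` U1).
  split; first by apply: openI => //; case: clC.
  by rewrite CU1E; apply: closedI; [case: clC | exact: open_closedC].
move=> z xz; have [//|E2z] := xE z xz.
have [_ U1z] := xz _ clCU1 (conj Cx (EU1 x E1x)).
have : (U1 `&` U2) z by split => //; exact: EU2.
by rewrite U12.
Qed.

Lemma connected_quasi_component x : connected (quasi_component x).
Proof.
move=> B [b Bb] [V oV BV] [F clF BF]; set Q := quasi_component x.
have Qx : Q x by [].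
have E12 : (Q `&` F) `&` (Q `&` ~` V) = set0.
  apply/seteqP; split => // z [[Qz Fz] [_ nVz]].
  have : B z by rewrite BF.
  by rewrite BV => -[].
have QE : Q `<=` (Q `&` F) `|` (Q `&` ~` V).
  move=> z Qz; have [Vz|] := pselect (V z); last by right.
  have : B z by rewrite BV.
  by rewrite BF; left.
have clQ : closed Q by exact: closed_quasi_component.
have clE1 : closed (Q `&` F) by exact: closedI.
have clE2 : closed (Q `&` ~` V) by apply: closedI => //; exact: open_closedC.
have [Vx|nVx] := pselect (V x).
  have E1x : (Q `&` F) x by rewrite -BF BV.
  apply/seteqP; split; first by rewrite BV => z [].
  by rewrite BF; exact: quasi_component_sub_closed clE1 clE2 E12 QE E1x.
have E2x : (Q `&` ~` V) x by [].
rewrite setIC in E12; rewrite setUC in QE.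
have QO := quasi_component_sub_closed clE2 clE1 E12 QE E2x.
by move: Bb; rewrite BV => -[/QO [_]].
Qed.

Lemma totally_disconnected_zero_dimensional :
  totally_disconnected [set: T] -> zero_dimensional T.
Proof.
move=> tdT x y xy; apply: contrapT => /forallNP noC.
have : quasi_component x `<=` [set x].
  have Qconn : connected (quasi_component x) := @connected_quasi_component x.
  by rewrite -(tdT x I) => z xz; exists (quasi_component x) => //; split.
move=> /(_ y) xy'; move/eqP: xy; apply; apply/esym/xy' => C clC Cx.
by apply: contrapT => nCy; apply: (noC C).
Qed.

End QuasiComponent.

Lemma range_sub_omega_limit (X : topologicalType) (F : X -> X) x w q n0 :
  (0 < q)%N -> (forall j, (fun k => iter (n0 + k * q + j)%N F x) @ \oo --> iter j F w) ->
  range (fun n => iter n F w) `<=` omega_limit F x.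
Proof.
move=> q_gt0 cvg_x _ [j _ <-] U Uj N.
have [k0 _ Uk] := cvg_x j U Uj.
exists (n0 + maxn k0 N * q + j)%N; split; last by apply: Uk; rewrite /= leq_maxl.
have : (maxn k0 N <= maxn k0 N * q)%N by rewrite leq_pmulr.
have : (N <= maxn k0 N)%N := leq_maxr k0 N.
lia.
Qed.

Lemma omega_limit_sub_range (X : topologicalType) (F : X -> X) x w q n0 :
  hausdorff_space X -> (0 < q)%N ->
  (forall j, (fun k => iter (n0 + k * q + j)%N F x) @ \oo --> iter j F w) ->
  omega_limit F x `<=` range (fun n => iter n F w).
Proof.
move=> hX q_gt0 cvg_x y xy; apply: contrapT => y_out.
have sep j : exists AB : set X * set X,
    [/\ nbhs y AB.1, nbhs (iter j F w) AB.2 & AB.1 `&` AB.2 = set0].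
  have /existsNP [A /existsNP [B]] : ~ cluster (nbhs y) (iter j F w).
    by move=> /hX yj; apply: y_out; exists j.
  move=> /not_implyP [yA /not_implyP [wB nAB]]; exists (A, B); split => //.
  by apply/seteqP; split => // z ABz; apply: nAB; exists z.
have [AB ABP] := choice sep.
have late j : exists k0, forall k, (k0 <= k)%N -> (AB j).2 (iter (n0 + k * q + j) F x).
  by have [_ wB _] := ABP j; have [k0 _ Bk] := cvg_x j _ wB; exists k0 => k /Bk.
have [k kP] := choice late.
have yA : nbhs y (\bigcap_(j < q) (AB j).1).
  rewrite bigcap_mkord; apply: big_ind => [|A B|j _]; first exact: filterT.
    exact: filterI.
  by have [] := ABP j.
have [n [le_Kn An]] := xy _ yA (n0 + (\max_(j < q) k j) * q)%N.
set m := (n - n0)%N.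
have nE : n = (n0 + m %/ q * q + m %% q)%N.
  by rewrite -addnA -divn_eq subnKC // (leq_trans (leq_addr _ _) le_Kn).
set j := (m %% q)%N; have lt_jq : (j < q)%N by rewrite ltn_mod.
have le_kj : (k j <= m %/ q)%N.
  apply: leq_trans (@leq_bigmax _ (fun j : 'I_q => k j) (Ordinal lt_jq)) _.
  by rewrite leq_divRL // leq_subRL ?(leq_trans (leq_addr _ _) le_Kn) // addnC.
have [_ _ AB0] := ABP j.
have : ((AB j).1 `&` (AB j).2) (iter n F x).
  by split; [exact: An | rewrite nE; exact: kP].
by rewrite AB0.
Qed.

Lemma periodic_orbit_omega_limit (X : topologicalType) (F : X -> X) x :
  hausdorff_space X -> asymptotically_periodic F x -> periodic_orbit F (omega_limit F x).
Proof.
move=> hX [w [q [n0 [q_gt0 Fw cvg_x]]]]; exists w, q; split => //.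
apply/seteqP; split; first exact: omega_limit_sub_range cvg_x.
exact: range_sub_omega_limit cvg_x.
Qed.

Lemma homeomorphism_conj (X Y : topologicalType) (h : X -> Y) (g : Y -> X) (s : X -> X) :
  cancel h g -> cancel g h -> continuous h -> continuous g ->
  homeomorphism s -> homeomorphism (h \o s \o g).
Proof.
move=> hK gK hc gc [t [sK tK sc tc]]; exists (h \o t \o g); split.
- by move=> y /=; rewrite hK sK gK.
- by move=> y /=; rewrite hK tK gK.
- by move=> y; apply: continuous_comp (gc y) (continuous_comp (sc _) (hc _)).
- by move=> y; apply: continuous_comp (gc y) (continuous_comp (tc _) (hc _)).
Qed.

Lemma asymptotically_periodic_conj (X Y : topologicalType) (h : X -> Y) (g : Y -> X)
    (s : X -> X) y :
  cancel h g -> cancel g h -> continuous h -> asymptotically_periodic s (g y) ->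
  asymptotically_periodic (h \o s \o g) y.
Proof.
move=> hK gK hc [z [q [n0 [q_gt0 sz cvg_y]]]].
have iterE n x : iter n (h \o s \o g) x = h (iter n s (g x)).
  by elim: n => [|n IHn]; rewrite ?gK // iterS IHn /= hK.
exists (h z), q, n0; split => //; first by rewrite iterE hK sz.
move=> j; rewrite iterE hK; under eq_fun do rewrite iterE.
by apply: continuous_cvg; [exact: hc | exact: cvg_y].
Qed.

(* [homeomorphism_cantor_like] needs a pointed space; a Cantor set is nonempty. *)
Definition pointed_at (R : realType) (K : metricType R) (x0 : K) : Type := K.
HB.instance Definition _ (R : realType) (K : metricType R) (x0 : K) :=
  PseudoMetric.on (pointed_at x0).
HB.instance Definition _ (R : realType) (K : metricType R) (x0 : K) :=
  isPointed.Build (pointed_at x0) x0.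

Lemma cantor_set_homeomorphic (R : realType) (K : metricType R) : cantor_set K ->
  exists (h : cantor_space -> K) (g : K -> cantor_space),
  [/\ cancel h g, cancel g h, continuous h & continuous g].
Proof.
case=> -[x0 _] tdK perfK cptK.
have hausK : hausdorff_space (pointed_at x0) := metric_hausdorff (T := K).
have : cantor_like (pointed_at x0).
  by split => //; exact: totally_disconnected_zero_dimensional.
move=> /homeomorphism_cantor_like [f [fc fcl]].
have fK : cancel f f^-1 by move=> a; exact: funK (in_setT a).
have fVK : cancel f^-1 f by move=> a; exact: invK (in_setT a).
exists f, f^-1; split => //; apply/continuous_closedP => A clA.
have -> : f^-1 @^-1` A = f @` A.
  apply/seteqP; split => y; first by exists (f^-1 y) => //; exact: fVK.
  by move=> [a Aa <-]; rewrite /= fK.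
exact: fcl.
Qed.

Local Open Scope ring_scope.

Lemma continuous_mdist (R : realType) (X : topologicalType) (K : metricType R)
    (a b : X -> K) :
  continuous a -> continuous b -> continuous (fun x => mdist (a x) (b x) : R).
Proof.
move=> ac bc x; apply/cvgrPdist_lt => e e_gt0; have e2_gt0 : 0 < e / 2 by rewrite divr_gt0.
have := ac x _ (nbhsx_ballx (a x) _ e2_gt0); have := bc x _ (nbhsx_ballx (b x) _ e2_gt0).
move=> bx ax; near=> t.
have : ball (a x) (e / 2) (a t) by near: t; exact: ax.
have : ball (b x) (e / 2) (b t) by near: t; exact: bx.
rewrite !ballEmdist /= => bt at_.
have := metric_triangle (a x) (a t) (b x); have := metric_triangle (a t) (b t) (b x).
have := metric_triangle (a t) (a x) (b t); have := metric_triangle (a x) (b x) (b t).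
rewrite (metric_sym (a t) (a x)) (metric_sym (b t) (b x)).
by rewrite ltr_distlC; move=> *; apply/andP; split; lra.
Unshelve. all: by end_near.
Qed.

Lemma continuous_attains_max (R : realType) (X : topologicalType) (f : X -> R) :
  [set: X] !=set0 -> compact [set: X] -> continuous f -> exists x0, forall x, f x <= f x0.
Proof.
move=> X0 cptX fc; have [|x0 _ fx0] := @compact_EVT_max X R f setT X0 cptX.
  exact: continuous_subspaceT.
by exists x0 => x; apply: fx0; rewrite inE.
Qed.

Lemma cantor_space_mdist_lt (R : realType) (K : metricType R) (h : cantor_space -> K)
    (eps : R) :
  continuous h -> 0 < eps -> exists N, forall y z, eqprefix N y z -> mdist (h y) (h z) < eps.
Proof.
move=> hc eps_gt0; have e2_gt0 : 0 < eps / 2 by rewrite divr_gt0.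
apply: cantor_uniform_prefix => x.
have /nbhs_eqprefixP [n hn] := hc x _ (nbhsx_ballx (h x) _ e2_gt0).
exists n => y z xy xz; move: (hn y xy) (hn z xz); rewrite /= !ballEmdist /= => hy hz.
have := metric_triangle (h y) (h x) (h z); rewrite (metric_sym (h y) (h x)); lra.
Qed.

Theorem theorem1p2 (R : realType) (K : metricType R) (hK : cantor_set K)
    (T : K -> K) (hT : homeomorphism T) (eps : R) (heps : 0 < eps) :
  exists T' : K -> K,
    [/\ homeomorphism T',
        (exists x0 : K, forall x : K, mdist (T x) (T' x) <= mdist (T x0) (T' x0)),
        (forall x : K, mdist (T x) (T' x) < eps) &
        (forall x : K, periodic_orbit T' (omega_limit T' x))].
Proof.
have [h [g [hgK ghK hc gc]]] := cantor_set_homeomorphic hK.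
have [N hN] := cantor_space_mdist_lt hc heps.
have [s [s_homeo s_close s_ap]] :=
  cantor_space_approx N (homeomorphism_conj ghK hgK gc hc hT).
have T'_homeo := homeomorphism_conj hgK ghK hc gc s_homeo.
exists (h \o s \o g); split => //.
- have [K0 _ _ cptK] := hK; have [_ [_ _ Tc _]] := hT; have [_ [_ _ T'c _]] := T'_homeo.
  exact: continuous_attains_max K0 cptK (continuous_mdist Tc T'c).
- move=> x; have -> : T x = h ((g \o T \o h) (g x)) by rewrite /= !ghK.
  by apply: hN; exact: eqprefix_sym.
- move=> x; apply: periodic_orbit_omega_limit; first exact: metric_hausdorff.
  exact: asymptotically_periodic_conj.
Qed.
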